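(* Let $n\ge 1$ and let $\mathcal{F}=(W,R)$ be a finite transitive frame of circumference at most $n$ all of whose final clusters are simple. Let $X_\mathcal{F}$ be the space constructed from $\mathcal{F}$ as described in the context. Then $X_\mathcal{F}$ is openly irresolvable.
   Context: Spaces: a space is $k$-resolvable if it has $k$ pairwise disjoint non-empty dense subsets; resolvable means 2-resolvable; irresolvable means not resolvable; $X$ is openly irresolvable if every non-empty open subspace is irresolvable. $S\subseteq X$ is crowded in $X$ if it has no isolated points as a subspace. Frames: for transitive $(W,R)$, clusters are equivalence classes of $\{(x,y):x=y\text{ or }xRyRx\}$; the cluster of $x$ is degenerate if $x$ is irreflexive, non-degenerate otherwise, and simple if it is a non-degenerate singleton; $CRC'$ for clusters iff $xRy$ for representatives, $CR^\uparrow C'$ iff $CRC'$ and not $C'RC$; $C$ is final if there is no $C'\ne C$ with $CRC'$. The circumference is the supremum of lengths $m$ of cycles $x_1R\cdots Rx_mRx_1$ of distinct points (0 if none). Auxiliary spaces: fix a non-principal ultrafilter $\mathcal{U}$ on $\omega$; $E$ is $\omega$ with open sets $\mathcal{U}\cup\{\emptyset\}$. For $k\ge1$, $X_k$ is $\omega\times\{1,\dots,k\}$ whose open sets are $\emptyset$ and all $\bigcup_{i=1}^k(O_i\times\{i\})$ with each $O_i$ a non-empty open subset of $E$; $S_i=\omega\times\{i\}$. $Y_k$ is the subspace of $X_k$ obtained by removing from $X_k$ the union of all subsets of $X_k$ that are $(k+1)$-resolvable as subspaces, with the $k$-partition $\{Y_k\cap S_i:1\le i\le k\}$ (for $k=1$,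 $Y_1=X_1$, a copy of $E$). Construction of $X_\mathcal{F}$: for each cluster $C$ choose a space $X_C$ partitioned as $\{X_w:w\in C\}$: if $C=\{w\}$ is degenerate, $X_C=X_w=\{w\}$; if $C=\{w_1,\dots,w_k\}$ is non-degenerate, $X_C$ is a copy of $Y_k$ with the cells $Y_k\cap S_1,\dots,Y_k\cap S_k$ labelled $X_{w_1},\dots,X_{w_k}$. The $X_C$ are pairwise disjoint. $X_\mathcal{F}=\bigcup_C X_C$, where $O\subseteq X_\mathcal{F}$ is open iff for every $C$, $O\cap X_C$ is open in $X_C$, and if $O\cap X_C\ne\emptyset$ then $X_{C'}\subseteq O$ for all $C'$ with $CR^\uparrow C'$. *)

From mathcomp Require Import all_boot.
Set Implicit Arguments.
Unset Strict Implicit.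
Unset Printing Implicit Defensive.

(* A "topology" on a type T is given by its family of open sets [op].
   All notions below are relative to a subspace A of T: the open sets of the
   subspace A are the traces O ∩ A of open sets O. *)
Section Topo.
Variable T : Type.
Variable op : (T -> Prop) -> Prop.

Definition relopen (A V : T -> Prop) : Prop :=
  exists O, op O /\ forall x, V x <-> (O x /\ A x).

Definition dense_in (A D : T -> Prop) : Prop :=
  (forall x, D x -> A x) /\
  forall O, op O -> (exists x, O x /\ A x) -> exists x, O x /\ D x.

Definition kresolvable (k : nat) (A : T -> Prop) : Prop :=
  exists D : nat -> T -> Prop,
    (forall i, i < k -> dense_in A (D i) /\ exists x, D i x) /\
    (forall i j, i < k -> j < k -> i <> j -> forall x, D i x -> D j x -> False).

Definition resolvable (A : T -> Prop) : Prop := kresolvable 2 A.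
Definition irresolvable (A : T -> Prop) : Prop := ~ resolvable A.

Definition openly_irresolvable (X : T -> Prop) : Prop :=
  forall V, relopen X V -> (exists x, V x) -> irresolvable V.
End Topo.

Definition nonprincipal_ultrafilter (U : (nat -> Prop) -> Prop) : Prop :=
  U (fun _ => True) /\
  ~ U (fun _ => False) /\
  (forall A B : nat -> Prop, U A -> (forall x, A x -> B x) -> U B) /\
  (forall A B : nat -> Prop, U A -> U B -> U (fun x => A x /\ B x)) /\
  (forall A : nat -> Prop, U A \/ U (fun x => ~ A x)) /\
  (forall m : nat, ~ U (fun x => x = m)).

Section Aux.
Variable U : (nat -> Prop) -> Prop.

Definition openE (O : nat -> Prop) : Prop := U O \/ (forall x, ~ O x).

(* X_k : carrier omega × {0,...,k-1} (the paper's {1,...,k}, shifted by one),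
   encoded as pairs (m, i) with i < k inside nat * nat. *)
Definition carrierX (k : nat) (p : nat * nat) : Prop := p.2 < k.

Definition openX (k : nat) (O : nat * nat -> Prop) : Prop :=
  (forall p, O p -> carrierX k p) /\
  ((forall p, ~ O p) \/
   (forall i, i < k ->
      openE (fun m => O (m, i)) /\ exists m, O (m, i))).

Definition carrierY (k : nat) (p : nat * nat) : Prop :=
  carrierX k p /\
  ~ (exists A : nat * nat -> Prop,
        (forall q, A q -> carrierX k q) /\ A p /\ kresolvable (openX k) k.+1 A).

Definition openY (k : nat) (V : nat * nat -> Prop) : Prop :=
  relopen (openX k) (carrierY k) V.
End Aux.

Section Frame.
Variable W : finType.
Variable R : rel W.

Definition clust (x y : W) : bool := (x == y) || (R x y && R y x).

Definition csize (x : W) : nat := #|[pred y | clust x y]|.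

Definition circumference_le (n : nat) : Prop :=
  forall s : seq W, s <> [::] -> uniq s -> cycle R s -> size s <= n.

Definition final_cluster (x : W) : Prop := forall y, R x y -> clust x y.

Definition simple_cluster (x : W) : Prop :=
  R x x /\ forall y, clust x y -> y = x.

(* A labelling of each non-degenerate cluster C = {w_1,...,w_k}:
   lab w_i = i-1, i.e. an injection of C onto {0,...,k-1}. *)
Definition cluster_labelling (lab : W -> nat) : Prop :=
  (forall w, R w w -> lab w < csize w) /\
  (forall w y, R w w -> clust w y -> lab w = lab y -> w = y).

Variable U : (nat -> Prop) -> Prop.
Variable lab : W -> nat.

(* The cell X_w is
   - {(w,0)} if the cluster {w} is degenerate;
   - {(w,m) | (m, lab w) ∈ Y_k} if w lies in a non-degenerate cluster of size k
     (so X_C, the union of the X_w for w ∈ C, is a copy of Y_k with cell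
     Y_k ∩ S_i labelled X_{w_i}). *)
Definition carrierXF (p : W * nat) : Prop :=
  if R p.1 p.1 then carrierY U (csize p.1) (p.2, lab p.1) else p.2 = 0.

(* O is open in X_F iff for every cluster C, O ∩ X_C is open in X_C, and if
   O ∩ X_C is non-empty then X_C' ⊆ O for every C' with C R^↑ C'. *)
Definition openXF (O : W * nat -> Prop) : Prop :=
  (forall p, O p -> carrierXF p) /\
  (* O ∩ X_C open in X_C (for degenerate C every subset is open) *)
  (forall w, R w w ->
     exists V, openY U (csize w) V /\
       forall y m, clust w y ->
         (O (y, m) <-> V (m, lab y))) /\
  (forall w y m m', O (w, m) -> R w y -> ~~ R y w ->
     carrierXF (y, m') -> O (y, m')).
End Frame.

From mathcomp Require Import all_boot.
From Stdlib Require Import Classical.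

(* Every point of X_F lies below a final cluster, which is simple; there X_F
   looks like the ultrafilter space E, and every set in the ultrafilter is
   carried to an open subset of X_F.  A dense subset of an open V therefore
   meets that copy of E in an ultrafilter set, and two such sets intersect, so
   V cannot contain two disjoint dense subsets. *)

Set Implicit Arguments.
Unset Strict Implicit.
Unset Printing Implicit Defensive.

Definition image_set (T : Type) (f : nat -> T) (G : nat -> Prop) : T -> Prop :=
  fun x => exists2 m, G m & x = f m.

Lemma isolated_point_in_dense (T : Type) (op : (T -> Prop) -> Prop)
    (A D O : T -> Prop) (a : T) :
  op O -> O a -> A a -> (forall x, O x -> A x -> x = a) ->
  dense_in op A D -> D a.
Proof.
move=> hO Oa Aa Oiso [Dsub Ddense].
have [x [Ox Dx]] := Ddense O hO (ex_intro _ a (conj Oa Aa)).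
by rewrite -(Oiso x Ox (Dsub x Dx)).
Qed.

Section UltrafilterImage.
Variable U : (nat -> Prop) -> Prop.
Hypothesis hU : nonprincipal_ultrafilter U.

Lemma ultrafilter_nonempty A : U A -> exists x, A x.
Proof.
have [_ [U0 [Umono _]]] := hU; move=> UA; apply: NNPP => noA; apply: U0.
by apply: (Umono _ _ UA) => x Ax; apply: noA; exists x.
Qed.

Variables (T : Type) (op : (T -> Prop) -> Prop) (f : nat -> T).
Hypothesis open_image : forall G, U G -> op (image_set f G).

Lemma ultrafilter_trace_dense A D S :
  U S -> (forall m, S m -> A (f m)) -> dense_in op A D ->
  U (fun m => D (f m)).
Proof.
have [_ [_ [_ [Umeet [Utot _]]]]] := hU.
move=> US SA [_ Ddense]; have [UD // | UnD] := Utot (fun m => D (f m)).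
have UG := Umeet _ _ UnD US.
have [m0 Gm0] := ultrafilter_nonempty UG.
have [_ [[m [nDm _] ->] Dm]] :
    exists x, image_set f (fun m => ~ D (f m) /\ S m) x /\ D x.
  apply: Ddense (open_image UG) _.
  by exists (f m0); split; [exists m0 | exact: SA Gm0.2].
by case: (nDm Dm).
Qed.

Lemma irresolvable_of_ultrafilter_trace A S :
  U S -> (forall m, S m -> A (f m)) -> irresolvable op A.
Proof.
have [_ [_ [_ [Umeet _]]]] := hU.
move=> US SA [D [HD Hdisj]].
have trace i : i < 2 -> U (fun m => D i (f m)).
  by move=> /HD [Hdense _]; exact: ultrafilter_trace_dense US SA Hdense.
have [m [D0m D1m]] := ultrafilter_nonempty (Umeet _ _ (trace 0 isT) (trace 1 isT)).
exact: Hdisj 0 1 isT isT _ _ D0m D1m.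
Qed.

(* If the trace of A is not in the ultrafilter, every point of A is isolated
   in A, and an isolated point belongs to every dense subset. *)
Lemma irresolvable_sub_image A :
  (forall x, A x -> exists m, x = f m) -> irresolvable op A.
Proof.
have [_ [_ [Umono [_ [Utot _]]]]] := hU.
move=> Af; case: (Utot (fun m => A (f m))) => [UA | UnA].
  exact: irresolvable_of_ultrafilter_trace UA _.
move=> [D [HD Hdisj]].
have [[D0sub _] [a D0a]] := HD 0 isT.
have [j def_a] := Af a (D0sub a D0a); subst a.
pose G m := ~ A (f m) \/ m = j.
have UG : U G by apply: (Umono _ _ UnA) => m; left.
have D1j : D 1 (f j).
  apply: isolated_point_in_dense (open_image UG) _ (D0sub _ D0a) _ (proj1 (HD 1 isT)).
    by exists j => //; right.
  by move=> _ [m [nAm | ->] ->] // Am.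
exact: Hdisj 0 1 isT isT _ _ D0a D1j.
Qed.

End UltrafilterImage.

Section SpaceX1.
Variable U : (nat -> Prop) -> Prop.
Hypothesis hU : nonprincipal_ultrafilter U.

Lemma openX1_image G : U G -> openX U 1 (image_set (fun m => (m, 0)) G).
Proof.
have [_ [_ [Umono _]]] := hU.
move=> UG; split; first by move=> _ [m _ ->].
right=> i; rewrite ltnS leqn0 => /eqP ->; split.
  by left; apply: (Umono _ _ UG) => m Gm; exists m.
by have [m Gm] := ultrafilter_nonempty hU UG; exists m; exists m.
Qed.

Lemma carrierY1 m : carrierY U 1 (m, 0).
Proof.
split=> // -[A [AX [_ Ares]]].
apply: (irresolvable_sub_image hU openX1_image) Ares => -[m' i] /AX.
by rewrite /carrierX ltnS leqn0 => /eqP /= ->; exists m'.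
Qed.

End SpaceX1.

Section FinalCluster.
Variables (W : finType) (R : rel W).
Hypothesis R_trans : transitive R.

Definition strict_up (z : W) : {set W} := [set y | R z y && ~~ R y z].

Lemma strict_up_proper z y : R z y -> ~~ R y z -> strict_up y \proper strict_up z.
Proof.
move=> Rzy Nyz; apply/properP; split.
  apply/subsetP => x; rewrite !inE => /andP [Ryx Nxy].
  rewrite (R_trans Rzy Ryx) /=; apply: contra Nxy => Rxz.
  exact: R_trans Rxz Rzy.
by exists y; rewrite !inE ?Rzy ?Nyz ?andbN.
Qed.

(* Take, above w, a point whose strict upset is smallest. *)
Lemma exists_final_above w :
  exists2 v, final_cluster R v & v = w \/ R w v && ~~ R v w.
Proof.
pose P z := (z == w) || R w z && ~~ R z w.
case: (@arg_minnP _ w P (fun z => #|strict_up z|)); first by rewrite /P eqxx.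
move=> v Pv vmin; exists v; last by case/orP: Pv => [/eqP -> | Pv]; [left | right].
move=> y Rvy; rewrite /clust Rvy /=; apply/orP; right; apply: contraT => Nyv.
have Py : P y.
  apply/orP; right; case/orP: Pv => [/eqP <- | /andP [Rwv Nvw]].
    by rewrite Rvy.
  rewrite (R_trans Rwv Rvy); apply: contra Nvw => Ryw.
  by rewrite (R_trans Rvy Ryw).
by have := vmin y Py; rewrite leqNgt proper_card // strict_up_proper.
Qed.

End FinalCluster.

Section SimpleCluster.
Variables (W : finType) (R : rel W) (U : (nat -> Prop) -> Prop) (lab : W -> nat).
Hypothesis hU : nonprincipal_ultrafilter U.
Hypothesis Hlab : cluster_labelling R lab.
Variable w : W.
Hypothesis Sw : simple_cluster R w.

Lemma csize_simple : csize R w = 1.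
Proof.
have [_ sing] := Sw; rewrite /csize (eq_card (B := pred1 w)) ?card1 // => y.
by rewrite !inE; apply/idP/eqP => [/sing | ->]; rewrite // /clust eqxx.
Qed.

Lemma lab_simple : lab w = 0.
Proof.
have [Rww _] := Sw; have [lab_lt _] := Hlab.
by have := lab_lt w Rww; rewrite csize_simple ltnS leqn0 => /eqP.
Qed.

Lemma carrierXF_simple m : carrierXF R U lab (w, m).
Proof.
have [Rww _] := Sw.
by rewrite /carrierXF /= Rww csize_simple lab_simple; exact: carrierY1.
Qed.

Lemma openXF_simple_trace O m0 :
  openXF R U lab O -> O (w, m0) -> U (fun m => O (w, m)).
Proof.
have [_ [_ [Umono _]]] := hU; have [Rww _] := Sw.
move=> [_ [Oclust _]] Om0.
have [V [[O' [[_ hO'] HV]] OV]] := Oclust w Rww.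
rewrite csize_simple in hO' HV.
have wclust : clust R w w by rewrite /clust eqxx.
have O'V m : O (w, m) <-> O' (m, 0) /\ carrierY U 1 (m, 0).
  by rewrite OV // HV lab_simple.
have O'm0 : O' (m0, 0) by have [] := (O'V m0).1 Om0.
case: hO' => [O'0 | /(_ 0 isT) [[UO' | O'0] _]]; try by case: (O'0 _ O'm0).
by apply: (Umono _ _ UO') => m O'm; apply/O'V; split; last exact: carrierY1.
Qed.

Hypothesis Fw : final_cluster R w.

Lemma openXF_simple_image G : U G -> openXF R U lab (image_set (pair w) G).
Proof.
have [Rww sing] := Sw.
have clust_sym x y : clust R x y -> clust R y x.
  by rewrite /clust eq_sym andbC.
move=> UG; split; first by move=> _ [m _ ->]; exact: carrierXF_simple.
split.
  move=> v Rvv; case: (boolP (clust R v w)) => [/clust_sym /sing -> | Nvw].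
    exists (image_set (fun m => (m, 0)) G); split.
      rewrite csize_simple; exists (image_set (fun m => (m, 0)) G).
      split; first exact: openX1_image.
      by move=> x; split=> [[m Gm ->] | []] //; split; [exists m | exact: carrierY1].
    move=> y m /sing ->; rewrite lab_simple.
    by split=> -[m' Gm' [->]]; exists m'.
  exists (fun _ => False); split.
    exists (fun _ => False); split; last by move=> x; split=> [|[]].
    by split; [move=> _ [] | left=> _ []].
  by move=> y m vy; split=> // -[m' _ [ey _]]; subst y; rewrite vy in Nvw.
move=> _ y m m' [_ _ [-> _]] Rwy Nyw _.
have := Fw Rwy; rewrite /clust => /orP [/eqP ey | /andP [_ Ryw]].
  by subst y; rewrite Rww in Nyw.
by rewrite Ryw in Nyw.
Qed.

End SimpleCluster.

Theorem lemma9 (U : (nat -> Prop) -> Prop) (n : nat) (W : finType) (R : rel W)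
    (lab : W -> nat) :
  nonprincipal_ultrafilter U ->
  1 <= n ->
  transitive R ->
  circumference_le R n ->
  (forall w : W, final_cluster R w -> simple_cluster R w) ->
  cluster_labelling R lab ->
  openly_irresolvable (openXF R U lab) (carrierXF R U lab).
Proof.
move=> hU _ R_trans _ final_simple Hlab V [O [hO HV]] [p Vp].
have [w Fw p_below_w] := exists_final_above R_trans p.1.
have Sw := final_simple w Fw.
have Op : O p by have [] := (HV p).1 Vp.
have UO : U (fun m => O (w, m)).
  case: p_below_w => [ew | /andP [Rpw Nwp]].
    case: p Op {Vp} ew => /= a m0 Op ea; subst a.
    exact: (openXF_simple_trace hU Hlab Sw hO Op).
  have [UT [_ [Umono _]]] := hU; have [_ [_ Oup]] := hO.
  apply: (Umono _ _ UT) => m _; case: p Op Rpw Nwp {Vp} => a b Op Rpw Nwp.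
  exact: Oup Op Rpw Nwp (carrierXF_simple hU Hlab Sw m).
apply: (irresolvable_of_ultrafilter_trace hU (openXF_simple_image hU Hlab Sw Fw) UO).
by move=> m Om; apply/HV; split=> //; exact: carrierXF_simple.
Qed.
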